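(* Let $y_1,\dots,y_n$ be invariant coordinates on $V$ with Jacobian $J$. For every multi-index $I=(i_1,\dots,i_s)$ with $s\ge1$, the $V$-valued rational map $J^{2s-1}\,\partial_I v$ on $V$ is a polynomial (regular) map $V\to V$.
   Context: $V$ is an $n$-dimensional complex vector space with basis $e_1,\dots,e_n$ and corresponding coordinates $u_1,\dots,u_n$; $G\subset GL(V)$ is a finite group and $\sigma_1,\dots,\sigma_m$ a fixed minimal system of homogeneous generators of $\mathbb C[V]^G$. A system of invariant coordinates is a choice $y_1=\sigma_{j_1},\dots,y_n=\sigma_{j_n}$ of $n$ of these generators whose Jacobian $J=\det(\partial y_i/\partial u_a)$ is not identically zero. Let $(c_{ai})$ be the inverse matrix of $(\partial y_i/\partial u_a)$ (entries in the field $\mathbb C(V)$) and let $D_i=\sum_a c_{ai}\,\partial/\partial u_a$ be the corresponding commuting derivations of $\mathbb C(V)$ (the coordinate vector fields $\partial/\partial y_i$). Let $v=\sum_a u_a e_a$ denote the identity map of $V$. For a multi-index $I=(i_1,\dots,i_s)$ with $i_k\in\{1,\dots,n\}$, $\partial_I v:=\sum_a D_{i_1}\cdots D_{i_s}(u_a)\,e_a$, a $V$-valued rational map on $V$ (the partial derivative of the identity map in the coordinates $y$); $\partial_\emptyset v=v$. *)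

From HB Require Import structures.
From mathcomp Require Import all_boot all_order all_algebra.
From mathcomp Require Import generic_quotient fraction.
From mathcomp Require Import mpoly.
From mathcomp Require Import complex.
From mathcomp Require Import reals.

Set Implicit Arguments.
Unset Strict Implicit.
Unset Printing Implicit Defensive.

Import GRing.Theory.
Local Open Scope ring_scope.
Local Open Scope quotient_scope.

Notation tofrac := (@FracField.tofrac _).
Notation "x %:F" := (@FracField.tofrac _ x) : ring_scope.

Section InvCoord.
Variables (R : realType) (n : nat).

(* the complex numbers R[i]; polynomial functions C[V] on V = C^n *)
Local Notation C := (R[i]).
Local Notation P := {mpoly C[n]}.
Local Notation K := {fraction P}.

(* linear substitution: (act g f)(u) = f(g u) *)
Definition act (g : 'M[C]_n) (f : P) : P :=
  f \mPo [tuple \sum_(b < n) (g a b)%:MP * 'X_b | a < n].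

Definition is_fin_subgroup (G : seq 'M[C]_n) : Prop :=
  [/\ (1%:M \in G), (forall g, g \in G -> g \in unitmx)
    & (forall g h, g \in G -> h \in G -> g *m h \in G)].

Definition invariant (G : seq 'M[C]_n) (f : P) : Prop :=
  forall g, g \in G -> act g f = f.

Definition homogeneous (f : P) : Prop := exists d : nat, f \is ishomog1 d mdeg.

Definition generates (G : seq 'M[C]_n) (m : nat) (sigma : m.-tuple P) : Prop :=
  forall f, invariant G f -> exists Q : {mpoly C[m]}, f = Q \mPo sigma.

(* sigma is a minimal system of homogeneous generators of C[V]^G:
   homogeneous invariants generating C[V]^G, no proper subfamily of which
   generates C[V]^G (the subfamily indexed by S is encoded by replacing
   the generators outside S by 0). *)
Definition minimal_hom_generators (G : seq 'M[C]_n) (m : nat)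
    (sigma : m.-tuple P) : Prop :=
  [/\ (forall j, homogeneous (tnth sigma j)),
      (forall j, invariant G (tnth sigma j)),
      generates G sigma
    & (forall S : {set 'I_m},
         generates G [tuple if j \in S then tnth sigma j else 0 | j < m] ->
         S = setT)].

Definition jacmx (y : 'I_n -> P) : 'M[P]_n := \matrix_(i, a) mderiv a (y i).
Definition jacobian (y : 'I_n -> P) : P := \det (jacmx y).

Definition fderiv (a : 'I_n) (x : K) : K :=
  let r := repr x in
  ((mderiv a (\n_r) * \d_r - \n_r * mderiv a (\d_r))%:F / (\d_r ^+ 2)%:F).

Definition cmx (y : 'I_n -> P) : 'M[K]_n := invmx (map_mx tofrac (jacmx y)).

(* D_i = sum_a c_{ai} d/du_a  (= d/dy_i) *)
Definition Dy (y : 'I_n -> P) (i : 'I_n) (x : K) : K :=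
  \sum_(a < n) cmx y a i * fderiv a x.

Definition Dmulti (y : 'I_n -> P) (I : seq 'I_n) (x : K) : K :=
  foldr (Dy y) x I.

(* a-th component of the V-valued rational map d_I v *)
Definition dIv (y : 'I_n -> P) (I : seq 'I_n) (a : 'I_n) : K :=
  Dmulti y I ('X_a)%:F.

End InvCoord.

From HB Require Import structures.
From mathcomp Require Import all_boot all_order all_algebra.
From mathcomp Require Import generic_quotient fraction.
From mathcomp Require Import mpoly.
From mathcomp Require Import complex.
From mathcomp Require Import reals.
From mathcomp Require Import ring.
Set Implicit Arguments.
Unset Strict Implicit.
Unset Printing Implicit Defensive.

Import GRing.Theory.
Local Open Scope ring_scope.

(* With A the adjugate of the Jacobian matrix (dy_i/du_a), the coordinate
   fields are D_i = J^-1 sum_a A_ai d/du_a, and A has polynomial entries.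
   So D_i sends a polynomial to a polynomial over J and, by the quotient rule,
   a polynomial over J^(k+1) to a polynomial over J^(k+3).  Starting from the
   coordinate u_a, s applications of the D_i leave a polynomial over J^(2s-1). *)

Lemma frac_reprE (T : idomainType) (x : {fraction T}) :
  x = (\n_(repr x))%:F / (\d_(repr x))%:F.
Proof.
have d0 : (\d_(repr x))%:F != 0 :> {fraction T}.
  by rewrite tofrac_eq0 denom_ratioP.
apply: (mulIf d0); rewrite divfK //.
rewrite -[x in x * _]reprK; unlock FracField.tofrac.
rewrite -[LHS]FracField.pi_mul; apply/eqmodP => /=.
rewrite FracField.equivfE /FracField.mulf /=.
by rewrite !numden_Ratio ?mulf_neq0 ?oner_neq0 ?denom_ratioP // !mulr1 mulrC.
Qed.

(* The quotient rule gives the same result on two representatives of a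
   fraction, provided the derivatives satisfy the Leibniz rule. *)
Lemma quotient_rule_compat (T : comPzRingType) (p1 q1 p2 q2 dp1 dq1 dp2 dq2 : T) :
  p1 * q2 = p2 * q1 -> dp1 * q2 + p1 * dq2 = dp2 * q1 + p2 * dq1 ->
  (dp1 * q1 - p1 * dq1) * q2 ^+ 2 = (dp2 * q2 - p2 * dq2) * q1 ^+ 2.
Proof.
move=> Epq dEpq; apply/eqP; rewrite -subr_eq0; apply/eqP.
have -> : (dp1 * q1 - p1 * dq1) * q2 ^+ 2 - (dp2 * q2 - p2 * dq2) * q1 ^+ 2 =
  - (q2 * q1 * ((dp2 * q1 + p2 * dq1) - (dp1 * q2 + p1 * dq2))
     + q1 * dq2 * (p1 * q2 - p2 * q1) + q2 * dq1 * (p1 * q2 - p2 * q1)) by ring.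
by rewrite Epq dEpq !subrr !(mulr0, addr0) oppr0.
Qed.

Lemma mderiv_exp (T : comNzRingType) (n : nat) (i : 'I_n) (p : {mpoly T[n]}) k :
  (p ^+ k)^`M(i) = p^`M(i) * p ^+ k.-1 *+ k.
Proof.
elim: k => [|k IHk]; first by rewrite expr0 mulr0n -mpolyC1 mderivC.
by rewrite exprS mderivM {}IHk (mulrC p) mulrnAl -mulrA -exprSr mulrS; case k.
Qed.

Section InvariantCoordinates.
Variables (R : realType) (n : nat).
Local Notation P := {mpoly R[i][n]}.
Local Notation K := {fraction P}.

Lemma fderivE (a : 'I_n) (p q : P) : q != 0 ->
  fderiv a (p%:F / q%:F) = (p^`M(a) * q - p * q^`M(a))%:F / (q ^+ 2)%:F.
Proof.
move=> q0; rewrite /fderiv; set r := repr _.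
have d0 : \d_r != 0 := denom_ratioP r.
have : (\n_r)%:F / (\d_r)%:F = p%:F / q%:F :> K by rewrite -frac_reprE.
move/eqP; rewrite eqr_div ?tofrac_eq0 // -!tofracM tofrac_eq => /eqP E.
have dE := congr1 (mderiv a) E; rewrite !mderivM in dE.
apply/eqP; rewrite eqr_div; try by rewrite tofrac_eq0 expf_neq0.
apply/eqP; rewrite -[LHS]tofracM -[RHS]tofracM; congr (_ %:F).
exact: quotient_rule_compat.
Qed.

Lemma fderiv_tofrac (a : 'I_n) (p : P) : fderiv a p%:F = (p^`M(a))%:F.
Proof.
rewrite -[p%:F]divr1 -tofrac1 fderivE ?oner_neq0 //.
by rewrite -mpolyC1 mderivC mpolyC1 !mulr1 mulr0 subr0 expr1n tofrac1 divr1.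
Qed.

Lemma fderiv_div_exp (a : 'I_n) (p q : P) k : q != 0 ->
  fderiv a (p%:F / q%:F ^+ k.+1) =
  (p^`M(a) * q - p * q^`M(a) *+ k.+1)%:F / q%:F ^+ k.+2.
Proof.
move=> q0; rewrite -tofracXn fderivE ?expf_neq0 // mderiv_exp /=.
apply/eqP; rewrite eqr_div; try by rewrite ?tofrac_eq0 !expf_neq0 ?tofrac_eq0.
apply/eqP; rewrite -[_%:F ^+ _]tofracXn -[LHS]tofracM -[RHS]tofracM.
by apply/eqP; rewrite tofrac_eq; apply/eqP; rewrite !exprS; ring.
Qed.

Variable y : 'I_n -> P.
Local Notation J := (jacobian y).
Local Notation A := (\adj (jacmx y)).
Hypothesis J_neq0 : J != 0.

Lemma JF_neq0 : J%:F != 0 :> K.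
Proof. by rewrite tofrac_eq0. Qed.

Lemma cmxE a i : cmx y a i = (J%:F)^-1 * (A a i)%:F.
Proof.
rewrite /cmx /invmx unitmxE det_map_mx unitfE JF_neq0 -map_mx_adj !mxE; reflexivity.
Qed.

Lemma Dy_adjE i x :
  Dy y i x = (J%:F)^-1 * \sum_a (A a i)%:F * fderiv a x.
Proof.
by rewrite /Dy mulr_sumr; apply: eq_bigr => a _; rewrite cmxE -mulrA.
Qed.

Lemma Dy_tofrac i (p : P) :
  Dy y i p%:F = (\sum_a A a i * p^`M(a))%:F / J%:F.
Proof.
rewrite Dy_adjE mulrC.
by under eq_bigr => a _ do rewrite fderiv_tofrac -tofracM; rewrite -rmorph_sum.
Qed.

Lemma Dy_div_exp i (p : P) k :
  Dy y i (p%:F / J%:F ^+ k.+1) =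
  (\sum_a A a i * (p^`M(a) * J - p * J^`M(a) *+ k.+1))%:F / J%:F ^+ k.+3.
Proof.
rewrite Dy_adjE [in RHS]rmorph_sum mulr_sumr mulr_suml; apply: eq_bigr => a _.
by rewrite fderiv_div_exp // rmorphM mulrCA [J%:F^-1 * _]mulrCA -invfM -exprS mulrA.
Qed.

Lemma Dmulti_cons_tofrac i I (f : P) : exists p : P,
  Dmulti y (i :: I) f%:F = p%:F / J%:F ^+ (2 * size I).+1.
Proof.
elim: I i => [|j I IH] i; first by rewrite expr1; eexists; apply: Dy_tofrac.
have [p Ep] := IH j.
have -> : Dmulti y [:: i, j & I] f%:F = Dy y i (Dmulti y (j :: I) f%:F) by [].
by rewrite Ep Dy_div_exp /= mulnS add2n; eexists.
Qed.

End InvariantCoordinates.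

Theorem lemma3p1 (R : realType) (n : nat) (G : seq 'M[R[i]]_n)
  (m : nat) (sigma : m.-tuple {mpoly R[i][n]}) (jj : 'I_n -> 'I_m) :
  is_fin_subgroup G ->
  minimal_hom_generators G sigma ->
  injective jj ->
  let y := fun i => tnth sigma (jj i) in
  jacobian y != 0 ->
  forall I : seq 'I_n, (0 < size I)%N ->
  forall a : 'I_n, exists p : {mpoly R[i][n]},
    (jacobian y)%:F ^+ (2 * size I - 1) * dIv y I a = p%:F.
Proof.
move=> _ _ _ y J_neq0 [//|i I] _ a.
have [p Ep] := Dmulti_cons_tofrac J_neq0 i I 'X_a.
exists p; rewrite /dIv Ep /= mulnS add2n subn1 /= mulrC divfK //.
by rewrite expf_neq0 // JF_neq0.
Qed.
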